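(* Let $\operatorname{sinc}(0)=1$ and $\operatorname{sinc}(t)=\frac{\sin(\pi t)}{\pi t}$ for $t\neq0$, and for a signal $x:\mathbb{R}\to\mathbb{C}$ define the Whittaker cylinder interpolation \[ Fx(t,\varphi)=\sum_{\tau\in\varphi} x(\tau)\operatorname{sinc}(t-\tau):=\lim_{N\to\infty}\sum_{\tau\in\varphi\cap[-N,N]} x(\tau)\operatorname{sinc}(t-\tau). \] Let $a=b+n$ with $n\in\mathbb{Z}$ and $b\in(-\tfrac12,\tfrac12)$, and let $x(t)=\exp(2\pi i\,a t)$. Then for all $t\in\mathbb{R}$ and $\varphi\in\mathbb{T}$, \[ Fx(t,\varphi)=\exp\!\big(2\pi i\,(b\,t+n\,\rho(\varphi))\big). \] Consequently, for any reals $v,\alpha$, the signal $z(t)=Fx(v t, c(\alpha t))$ satisfies $z(t)=\exp\!\big(2\pi i\,(b v+n\alpha)\,t\big)$ for all $t\in\mathbb{R}$.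
   Context: $\mathbb{T}=\mathbb{R}/\mathbb{Z}$; $c:\mathbb{R}\to\mathbb{T}$, $c(p)=p+\mathbb{Z}$; an element $\varphi\in\mathbb{T}$ is regarded as the set of reals $\tau$ with $c(\tau)=\varphi$; $\rho:\mathbb{T}\to[0,1)$ picks the unique representative of $\varphi$ in $[0,1)$. *)

From Stdlib Require Import Reals ZArith List.
Open Scope R_scope.

Definition C : Type := (R * R)%type.
Definition Cadd (u v : C) : C := (fst u + fst v, snd u + snd v).
Definition Cscal (r : R) (u : C) : C := (r * fst u, r * snd u).
Definition C0 : C := (0, 0).

Definition cexp2pi (theta : R) : C := (cos (2 * PI * theta), sin (2 * PI * theta)).

Definition sinc (t : R) : R :=
  if Req_EM_T t 0 then 1 else sin (PI * t) / (PI * t).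

(* floor via Stdlib's Int_part (= up r - 1, the greatest integer <= r) *)
Definition Zfloor (r : R) : Z := Int_part r.

(* An element phi of T = R/Z is represented by any real p with c(p) = phi;
   phi, as a set of reals, is { p + k | k in Z }. *)
Definition in_class (p tau : R) : Prop := exists k : Z, tau = p + IZR k.

(* rho(c(p)) : the representative of c(p) in [0,1) *)
Definition rho (p : R) : R := p - IZR (Zfloor p).

Fixpoint zrange (lo : Z) (len : nat) : list Z :=
  match len with
  | O => nil
  | S m => lo :: zrange (lo + 1)%Z m
  end.

(* Partial sum  sum_{tau in phi ∩ [-N,N]} x(tau) sinc(t - tau), phi = c(p).
   The integer window below contains every k with -N <= p+k <= N. *)
Definition cyl_partial (x : R -> C) (t p : R) (N : nat) : C :=
  fold_right
    (fun k acc =>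
       let tau := p + IZR k in
       if Rle_dec (- INR N) tau then
         if Rle_dec tau (INR N) then Cadd (Cscal (sinc (t - tau)) (x tau)) acc
         else acc
       else acc)
    C0
    (zrange (- Z.of_nat N - Zfloor p - 1)%Z (2 * N + 3)).

(* Fx(t, c(p)) = L : the partial sums converge (as N -> oo) to L. *)
Definition cyl_interp_is (x : R -> C) (t p : R) (L : C) : Prop :=
  Un_cv (fun N => fst (cyl_partial x t p N)) (fst L) /\
  Un_cv (fun N => snd (cyl_partial x t p N)) (snd L).

From Pilot Require Import Defs.
From Stdlib Require Import Reals ZArith Lra Lia List.
From Coquelicot Require Import Coquelicot.
Open Scope R_scope.

(* The k-th term of the series is exp(2 pi i a (p + k)) sinc (t - p - k).  Since a = b + n,
   it equals exp(2 pi i (b t + n p)) exp(- 2 pi i b s) sinc s with s = t - p - k, so everything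
   reduces to the band-limited identities
     sum_k cos (w (u - k)) sinc (u - k) = 1   and   sum_k sin (w (u - k)) sinc (u - k) = 0
   for |w| < pi.  By product-to-sum formulas these follow from two facts.
   (1) sum_k sin (g (u - k)) / (u - k), and likewise with cos, has the same limit for all
   g in (0, 2 pi): its derivative in g is the Dirichlet kernel sum_k cos (g (u - k)), which
   telescopes to boundary terms over 2 sin (g / 2).
   (2) h u = sum_k sinc (u - k) is identically 1: h is continuous and 1-periodic, h 0 = 1, and
   by (1) with g = pi / 2 it satisfies h (u / 2) + h ((u + 1) / 2) = 2 h u, which forces the
   maximum and the minimum of h to be attained at 0. *)

(** * Sums over integer windows *)

Fixpoint sum_len (f : Z -> R) (m : Z) (L : nat) : R :=
  match L with O => 0 | S L' => f m + sum_len f (m + 1)%Z L' end.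

Lemma sum_len_ext f g m L :
  (forall k, (m <= k < m + Z.of_nat L)%Z -> f k = g k) -> sum_len f m L = sum_len g m L.
Proof.
  revert m; induction L as [|L IH]; intros m H; simpl; [reflexivity|].
  rewrite (H m), (IH (m + 1)%Z); [reflexivity| |]; intros; try apply H; lia.
Qed.

Lemma sum_len_plus f g m L :
  sum_len (fun k => f k + g k) m L = sum_len f m L + sum_len g m L.
Proof. revert m; induction L as [|L IH]; intros m; simpl; [lra|]. rewrite IH; lra. Qed.

Lemma sum_len_scal c f m L : sum_len (fun k => c * f k) m L = c * sum_len f m L.
Proof. revert m; induction L as [|L IH]; intros m; simpl; [lra|]. rewrite IH; lra. Qed.

Lemma sum_len_minus f g m L :
  sum_len (fun k => f k - g k) m L = sum_len f m L - sum_len g m L.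
Proof. revert m; induction L as [|L IH]; intros m; simpl; [lra|]. rewrite IH; lra. Qed.

Lemma sum_len_app f m L1 L2 :
  sum_len f m (L1 + L2) = sum_len f m L1 + sum_len f (m + Z.of_nat L1) L2.
Proof.
  revert m; induction L1 as [|L1 IH]; intros m; cbn [sum_len Nat.add].
  - rewrite Z.add_0_r; lra.
  - rewrite IH; replace (m + 1 + Z.of_nat L1)%Z with (m + Z.of_nat (S L1))%Z by lia. lra.
Qed.

Lemma sum_len_rev f m L :
  sum_len f m L = sum_len (fun k => f (- k)%Z) (- (m + Z.of_nat L) + 1)%Z L.
Proof.
  induction L as [|L IH]; [reflexivity|].
  replace (S L) with (L + 1)%nat at 1 by lia.
  rewrite sum_len_app, IH; cbn [sum_len].
  replace (- (m + Z.of_nat (S L)) + 1)%Z with (- (m + Z.of_nat L))%Z by lia.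
  rewrite Z.opp_involutive. lra.
Qed.

Lemma sum_len_pair f m L :
  sum_len f (2 * m - 1)%Z (2 * L) = sum_len (fun k => f (2 * k - 1)%Z + f (2 * k)%Z) m L.
Proof.
  revert m; induction L as [|L IH]; intros m; [reflexivity|].
  replace (2 * S L)%nat with (S (S (2 * L))) by lia; cbn [sum_len].
  rewrite <- IH.
  replace (2 * m - 1 + 1 + 1)%Z with (2 * (m + 1) - 1)%Z by lia.
  replace (2 * m - 1 + 1)%Z with (2 * m)%Z by lia. lra.
Qed.

Lemma sum_len_zero f m L :
  (forall k, (m <= k < m + Z.of_nat L)%Z -> f k = 0) -> sum_len f m L = 0.
Proof.
  revert m; induction L as [|L IH]; intros m H; simpl; [reflexivity|].
  rewrite H, IH by (intros; try apply H; lia). lra.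
Qed.

Lemma sum_len_delta f m L k0 :
  (m <= k0 < m + Z.of_nat L)%Z -> (forall k, k <> k0 -> f k = 0) -> sum_len f m L = f k0.
Proof.
  revert m; induction L as [|L IH]; intros m Hk Hf; [lia|]; simpl.
  destruct (Z.eq_dec m k0) as [->|Hne].
  - rewrite sum_len_zero by (intros k Hk'; apply Hf; lia). lra.
  - rewrite Hf, IH by (auto; lia). lra.
Qed.

(** The sum over [m1 <= k <= m2]; it is empty when [m2 < m1], as [Z.to_nat] truncates. *)
Definition zsum (f : Z -> R) (m1 m2 : Z) : R := sum_len f m1 (Z.to_nat (m2 - m1 + 1)).

Lemma zsum_ext f g m1 m2 :
  (forall k, (m1 <= k <= m2)%Z -> f k = g k) -> zsum f m1 m2 = zsum g m1 m2.
Proof. intros H; apply sum_len_ext; intros k Hk; apply H; lia. Qed.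

Lemma zsum_split f m1 m m2 : (m1 <= m <= m2 + 1)%Z ->
  zsum f m1 m2 = zsum f m1 (m - 1) + zsum f m m2.
Proof.
  intros H; unfold zsum.
  replace (Z.to_nat (m2 - m1 + 1))
    with (Z.to_nat (m - 1 - m1 + 1) + Z.to_nat (m2 - m + 1))%nat by lia.
  rewrite sum_len_app; do 3 f_equal; lia.
Qed.

Lemma zsum_shift f z m1 m2 : zsum (fun k => f (k + z)%Z) m1 m2 = zsum f (m1 + z) (m2 + z).
Proof.
  unfold zsum; replace (m2 + z - (m1 + z))%Z with (m2 - m1)%Z by lia.
  generalize (Z.to_nat (m2 - m1 + 1)); intros L; revert m1.
  induction L as [|L IH]; intros m1; simpl; [reflexivity|].
  rewrite IH; replace (m1 + 1 + z)%Z with (m1 + z + 1)%Z by lia; reflexivity.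
Qed.

Lemma zsum_pair f m1 m2 : (m1 <= m2 + 1)%Z ->
  zsum (fun k => f (2 * k - 1)%Z + f (2 * k)%Z) m1 m2 = zsum f (2 * m1 - 1) (2 * m2).
Proof.
  intros H; unfold zsum; rewrite <- sum_len_pair; f_equal; lia.
Qed.

Lemma zsum_restrict g f lo hi m1 m2 :
  (lo <= m1)%Z -> (m2 <= hi)%Z -> (m1 <= m2 + 1)%Z ->
  (forall k, (m1 <= k <= m2)%Z -> g k = f k) -> (forall k, (k < m1 \/ m2 < k)%Z -> g k = 0) ->
  zsum g lo hi = zsum f m1 m2.
Proof.
  intros Hlo Hhi Hm Hin Hout.
  rewrite (zsum_split _ lo m1 hi), (zsum_split _ m1 (m2 + 1) hi) by lia.
  replace (m2 + 1 - 1)%Z with m2 by lia.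
  unfold zsum at 1 3.
  rewrite (sum_len_zero g lo), (sum_len_zero g (m2 + 1)%Z) by (intros; apply Hout; lia).
  rewrite Rplus_0_l, Rplus_0_r; apply zsum_ext; exact Hin.
Qed.

(** The two ends of the window tend to infinity independently. *)
Definition Zsum_cv (f : Z -> R) (l : R) : Prop :=
  forall eps, 0 < eps -> exists M : Z, forall m1 m2,
    (m1 <= - M)%Z -> (M <= m2)%Z -> Rabs (zsum f m1 m2 - l) < eps.

Lemma Zsum_cv_ext f g l : (forall k, f k = g k) -> Zsum_cv f l -> Zsum_cv g l.
Proof.
  intros Hfg Hf eps He; destruct (Hf eps He) as [M HM]; exists M; intros m1 m2 H1 H2.
  rewrite <- (zsum_ext f) by auto; auto.
Qed.

Lemma Zsum_cv_plus f g l1 l2 :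
  Zsum_cv f l1 -> Zsum_cv g l2 -> Zsum_cv (fun k => f k + g k) (l1 + l2).
Proof.
  intros Hf Hg eps He.
  destruct (Hf (eps / 2)) as [M1 H1]; [lra|]. destruct (Hg (eps / 2)) as [M2 H2]; [lra|].
  exists (Z.abs M1 + Z.abs M2)%Z; intros m1 m2 Hm1 Hm2.
  specialize (H1 m1 m2 ltac:(lia) ltac:(lia)); specialize (H2 m1 m2 ltac:(lia) ltac:(lia)).
  unfold zsum in *; rewrite sum_len_plus.
  replace (_ + _ - (l1 + l2))
    with ((sum_len f m1 (Z.to_nat (m2 - m1 + 1)) - l1)
          + (sum_len g m1 (Z.to_nat (m2 - m1 + 1)) - l2)) by ring.
  eapply Rle_lt_trans; [apply Rabs_triang|lra].
Qed.

Lemma Zsum_cv_scal c f l : Zsum_cv f l -> Zsum_cv (fun k => c * f k) (c * l).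
Proof.
  intros Hf eps He.
  assert (Hc : 0 < Rabs c + 1) by (pose proof (Rabs_pos c); lra).
  destruct (Hf (eps / (Rabs c + 1))) as [M HM]; [apply Rdiv_lt_0_compat; lra|].
  exists M; intros m1 m2 Hm1 Hm2; specialize (HM m1 m2 Hm1 Hm2).
  unfold zsum in *; rewrite sum_len_scal, <- Rmult_minus_distr_l, Rabs_mult.
  apply Rlt_le_trans with ((Rabs c + 1) * (eps / (Rabs c + 1))).
  - assert (0 < eps / (Rabs c + 1)) by (apply Rdiv_lt_0_compat; lra).
    pose proof (Rabs_pos (sum_len f m1 (Z.to_nat (m2 - m1 + 1)) - l)).
    pose proof (Rabs_pos c); nra.
  - apply Req_le; field; lra.
Qed.

Lemma Zsum_cv_unique f l1 l2 : Zsum_cv f l1 -> Zsum_cv f l2 -> l1 = l2.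
Proof.
  intros H1 H2; apply Rminus_diag_uniq; apply Rabs_eq_0.
  apply Rle_antisym; [|apply Rabs_pos]; apply Rnot_lt_le; intros Hpos.
  destruct (H1 (Rabs (l1 - l2) / 2)) as [M1 HM1]; [lra|].
  destruct (H2 (Rabs (l1 - l2) / 2)) as [M2 HM2]; [lra|].
  set (M := (Z.abs M1 + Z.abs M2)%Z).
  specialize (HM1 (- M)%Z M ltac:(lia) ltac:(lia)).
  specialize (HM2 (- M)%Z M ltac:(lia) ltac:(lia)).
  rewrite Rabs_minus_sym in HM1.
  pose proof (Rabs_triang (l1 - zsum f (- M) M) (zsum f (- M) M - l2)).
  replace (l1 - zsum f (- M) M + (zsum f (- M) M - l2)) with (l1 - l2) in H by ring.
  lra.
Qed.

Lemma Zsum_cv_shift f z l : Zsum_cv f l -> Zsum_cv (fun k => f (k + z)%Z) l.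
Proof.
  intros Hf eps He; destruct (Hf eps He) as [M HM].
  exists (Z.abs M + Z.abs z)%Z; intros m1 m2 Hm1 Hm2.
  rewrite zsum_shift; apply HM; lia.
Qed.

Lemma Zsum_cv_pair f l : Zsum_cv f l -> Zsum_cv (fun k => f (2 * k - 1)%Z + f (2 * k)%Z) l.
Proof.
  intros Hf eps He; destruct (Hf eps He) as [M HM].
  exists (Z.abs M)%Z; intros m1 m2 Hm1 Hm2.
  rewrite zsum_pair by lia; apply HM; lia.
Qed.

Lemma exists_IZR_gt x : exists M : Z, (0 <= M)%Z /\ x < IZR M.
Proof.
  destruct (archimed (Rabs x)) as [H _]; exists (Z.abs (up (Rabs x))); split; [lia|].
  rewrite abs_IZR; pose proof (Rle_abs x); pose proof (Rle_abs (IZR (up (Rabs x)))); lra.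
Qed.

Lemma sinc_nz s : s <> 0 -> sinc s = sin (PI * s) / (PI * s).
Proof. intros H; unfold sinc; destruct (Req_EM_T s 0); [contradiction|reflexivity]. Qed.

Lemma sinc_0 : sinc 0 = 1.
Proof. unfold sinc; destruct (Req_EM_T 0 0); [reflexivity|contradiction]. Qed.

Lemma sinc_opp s : sinc (- s) = sinc s.
Proof.
  destruct (Req_EM_T s 0) as [->|H]; [now rewrite Ropp_0|].
  rewrite !sinc_nz by lra; replace (PI * - s) with (- (PI * s)) by ring.
  rewrite sin_neg; field; split; [exact H|apply PI_neq0].
Qed.

Lemma sinc_IZR k : k <> 0%Z -> sinc (IZR k) = 0.
Proof.
  intros Hk; rewrite sinc_nz by (intros E; apply Hk, eq_IZR, E).
  rewrite sin_eq_0_1 by (exists k; ring); unfold Rdiv; ring.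
Qed.

Lemma continuity_sinc : continuity sinc.
Proof.
  intros s0; assert (HP := PI_RGT_0).
  destruct (Req_EM_T s0 0) as [->|Hs].
  - intros eps He; destruct (derivable_pt_lim_sin 0 eps He) as [del Hdel].
    exists (del / PI); split; [apply Rdiv_lt_0_compat; [apply cond_pos|exact HP]|].
    intros y [[_ Hy0] Hy]; simpl in Hy |- *; unfold R_dist in Hy |- *.
    rewrite sinc_0, sinc_nz by (intros E; apply Hy0; auto).
    rewrite Rminus_0_r in Hy.
    specialize (Hdel (PI * y) ltac:(apply Rmult_integral_contrapositive; split; lra)).
    rewrite Rplus_0_l, sin_0, cos_0, Rminus_0_r in Hdel; apply Hdel.
    rewrite Rabs_mult, (Rabs_right PI) by lra.
    apply Rmult_lt_reg_r with (/ PI); [apply Rinv_0_lt_compat; exact HP|].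
    replace (PI * Rabs y * / PI) with (Rabs y) by (field; lra); exact Hy.
  - apply continuity_pt_locally_ext with (f := fun s => sin (PI * s) / (PI * s)) (a := Rabs s0).
    + apply Rabs_pos_lt, Hs.
    + intros y Hy; symmetry; apply sinc_nz; intros ->.
      unfold Rdist in Hy; rewrite Rminus_0_l, Rabs_Ropp in Hy; lra.
    + apply derivable_continuous_pt; eexists; apply is_derive_Reals.
      auto_derive; [apply Rmult_integral_contrapositive; split; lra|reflexivity].
Qed.

(** * Sums of [sin (g s) / s] over shifted integers do not depend on [g] *)

(** Both functions are extended at [s = 0] so as to be smooth in [g]. *)
Definition sin_div (g s : R) : R := if Req_EM_T s 0 then g else sin (g * s) / s.
Definition cos_div (g s : R) : R := if Req_EM_T s 0 then 0 else cos (g * s) / s.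

Lemma sin_div_PI s : sin_div PI s = PI * sinc s.
Proof.
  unfold sin_div; destruct (Req_EM_T s 0) as [->|H]; [rewrite sinc_0; ring|].
  rewrite sinc_nz by exact H; field; split; [exact H|apply PI_neq0].
Qed.

Lemma is_derive_sin_div s g : is_derive (fun g => sin_div g s) g (cos (g * s)).
Proof.
  unfold sin_div; destruct (Req_EM_T s 0) as [->|Hs].
  - rewrite Rmult_0_r, cos_0; auto_derive; [exact I|reflexivity].
  - auto_derive; [exact I|field; exact Hs].
Qed.

Lemma is_derive_cos_div s g : is_derive (fun g => cos_div g s) g (- sin (g * s)).
Proof.
  unfold cos_div; destruct (Req_EM_T s 0) as [->|Hs].
  - rewrite Rmult_0_r, sin_0, Ropp_0; auto_derive; [exact I|reflexivity].
  - auto_derive; [exact I|field; exact Hs].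
Qed.

Lemma is_derive_sum_len (F : R -> Z -> R) (F' : Z -> R) g m L :
  (forall k, is_derive (fun x => F x k) g (F' k)) ->
  is_derive (fun x => sum_len (F x) m L) g (sum_len F' m L).
Proof.
  intros H; revert m; induction L as [|L IH]; intros m; simpl.
  - auto_derive; [exact I|reflexivity].
  - apply (is_derive_plus (fun x => F x m)); [apply H|apply IH].
Qed.

Lemma sum_len_cos_telescope g u m L :
  2 * sin (g / 2) * sum_len (fun k => cos (g * (u - IZR k))) m L =
  sin (g * (u - IZR m + / 2)) - sin (g * (u - IZR m - INR L + / 2)).
Proof.
  revert m; induction L as [|L IH]; intros m; cbn [sum_len].
  - rewrite Rminus_0_r; ring.
  - rewrite Rmult_plus_distr_l, IH, plus_IZR, S_INR.
    replace (g * (u - IZR m + / 2)) with (g * (u - IZR m) + g / 2) by field.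
    replace (g * (u - (IZR m + 1) + / 2)) with (g * (u - IZR m) - g / 2) by field.
    replace (g * (u - (IZR m + 1) - INR L + / 2))
      with (g * (u - IZR m - (INR L + 1) + / 2)) by ring.
    rewrite sin_plus, sin_minus; ring.
Qed.

Lemma sum_len_sin_telescope g u m L :
  2 * sin (g / 2) * sum_len (fun k => sin (g * (u - IZR k))) m L =
  cos (g * (u - IZR m - INR L + / 2)) - cos (g * (u - IZR m + / 2)).
Proof.
  revert m; induction L as [|L IH]; intros m; cbn [sum_len].
  - rewrite Rminus_0_r; ring.
  - rewrite Rmult_plus_distr_l, IH, plus_IZR, S_INR.
    replace (g * (u - IZR m + / 2)) with (g * (u - IZR m) + g / 2) by field.
    replace (g * (u - (IZR m + 1) + / 2)) with (g * (u - IZR m) - g / 2) by field.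
    replace (g * (u - (IZR m + 1) - INR L + / 2))
      with (g * (u - IZR m - (INR L + 1) + / 2)) by ring.
    rewrite cos_plus, cos_minus; ring.
Qed.

Lemma sin_half_between g0 c : 0 < g0 < 2 * PI -> Rmin PI g0 <= c <= Rmax PI g0 ->
  0 < sin (g0 / 2) <= sin (c / 2).
Proof.
  intros Hg Hc; assert (HP := PI_RGT_0); split; [apply sin_gt_0; lra|].
  unfold Rmin, Rmax in Hc; destruct (Rle_dec PI g0).
  - rewrite <- (sin_PI_x (g0 / 2)), <- (sin_PI_x (c / 2)); apply sin_incr_1; lra.
  - apply sin_incr_1; lra.
Qed.

Lemma Rabs_div_le a b A D : 0 < D <= b -> Rabs a <= A -> Rabs (a / b) <= A / D.
Proof.
  intros HD Ha; rewrite Rabs_div, (Rabs_right b) by lra.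
  apply Rle_trans with (A / b).
  - apply Rmult_le_compat_r; [left; apply Rinv_0_lt_compat|]; lra.
  - apply Rmult_le_compat_l; [pose proof (Rabs_pos a); lra|apply Rinv_le_contravar; lra].
Qed.

Lemma Rabs_div_le_inv x a : Rabs x <= 1 -> a <> 0 -> Rabs (x / a) <= / Rabs a.
Proof.
  intros Hx Ha; rewrite Rabs_div by exact Ha; unfold Rdiv.
  rewrite <- (Rmult_1_l (/ Rabs a)) at 2.
  apply Rmult_le_compat_r; [left; apply Rinv_0_lt_compat, Rabs_pos_lt, Ha|exact Hx].
Qed.

Definition abel_const (g0 : R) : R := (Rabs (g0 - PI) + 2) / sin (g0 / 2) ^ 2.

(** Summation by parts in integral form: if [F' = Psi' / (2 sin (g/2))] with [Psi] bounded,
    then [F] varies little, since [F - Psi / (2 sin (g/2))] has derivative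
    [Psi * cos (g/2) / (2 sin (g/2))^2]. *)
Lemma abel_bound (F Psi Psi' : R -> R) (B g0 : R) :
  0 < g0 < 2 * PI ->
  (forall g, 0 < g < 2 * PI -> is_derive F g (Psi' g / (2 * sin (g / 2)))) ->
  (forall g, is_derive Psi g (Psi' g)) ->
  (forall g, Rabs (Psi g) <= B) ->
  Rabs (F g0 - F PI) <= B * abel_const g0.
Proof.
  intros Hg HF HPsi HB; assert (HP := PI_RGT_0).
  set (s0 := sin (g0 / 2)).
  assert (Hs0 : 0 < s0 <= 1) by (split; [apply sin_gt_0; lra|apply SIN_bound]).
  set (G := fun g => F g - Psi g / (2 * sin (g / 2))).
  set (G' := fun g => Psi g * cos (g / 2) / (2 * sin (g / 2)) ^ 2).
  assert (HG : Rabs (G g0 - G PI) <= B / s0 ^ 2 * Rabs (g0 - PI)).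
  { destruct (MVT_abs G G' PI g0) as [c [-> Hc]].
    - intros c Hc; apply is_derive_Reals.
      destruct (sin_half_between g0 c Hg Hc) as [_ Hsc]; fold s0 in Hsc.
      assert (Hc0 : 0 < c < 2 * PI) by (unfold Rmin, Rmax in Hc; destruct (Rle_dec PI g0); lra).
      assert (Hden : is_derive (fun g => 2 * sin (g / 2)) c (cos (c / 2)))
        by (auto_derive; [exact I|unfold Rdiv; field]).
      replace (G' c) with (Psi' c / (2 * sin (c / 2))
        - (Psi' c * (2 * sin (c / 2)) - Psi c * cos (c / 2)) / (2 * sin (c / 2)) ^ 2)
        by (unfold G'; field; lra).
      unfold G; apply (is_derive_minus F); [apply HF, Hc0|].
      apply (is_derive_div Psi (fun g => 2 * sin (g / 2))); [apply HPsi|exact Hden|lra].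
    - apply Rmult_le_compat_r; [apply Rabs_pos|].
      destruct (sin_half_between g0 c Hg Hc) as [_ Hsc].
      apply Rabs_div_le; [fold s0 in Hsc; nra|].
      rewrite Rabs_mult; pose proof (Rabs_pos (Psi c)).
      pose proof (HB c); assert (Rabs (cos (c / 2)) <= 1) by apply Rabs_le, COS_bound.
      pose proof (Rabs_pos (cos (c / 2))); nra. }
  assert (H0 : Rabs (Psi g0 / (2 * s0)) <= B / s0 ^ 2) by (apply Rabs_div_le; [nra|apply HB]).
  assert (HPI : Rabs (Psi PI / (2 * sin (PI / 2))) <= B / s0 ^ 2)
    by (rewrite sin_PI2; apply Rabs_div_le; [nra|apply HB]).
  replace (F g0 - F PI) with ((G g0 - G PI) + Psi g0 / (2 * s0) - Psi PI / (2 * sin (PI / 2)))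
    by (unfold G; fold s0; ring).
  replace (B * abel_const g0) with (B / s0 ^ 2 * Rabs (g0 - PI) + B / s0 ^ 2 + B / s0 ^ 2)
    by (unfold abel_const; fold s0; field; lra).
  unfold Rminus at 1; eapply Rle_trans; [apply Rabs_triang|rewrite Rabs_Ropp].
  apply Rplus_le_compat; [|exact HPI].
  eapply Rle_trans; [apply Rabs_triang|]; lra.
Qed.

Lemma zsum_sin_div_close g0 u m1 m2 : 0 < g0 < 2 * PI -> (m1 <= m2 + 1)%Z ->
  u - IZR m1 + / 2 <> 0 -> u - IZR m2 - / 2 <> 0 ->
  Rabs (zsum (fun k => sin_div g0 (u - IZR k) - sin_div PI (u - IZR k)) m1 m2)
  <= (/ Rabs (u - IZR m1 + / 2) + / Rabs (u - IZR m2 - / 2)) * abel_const g0.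
Proof.
  intros Hg Hm Ha Hb; unfold zsum; rewrite sum_len_minus.
  set (L := Z.to_nat (m2 - m1 + 1)); set (a := u - IZR m1 + / 2) in *.
  set (b := u - IZR m2 - / 2) in *.
  assert (HL : u - IZR m1 - INR L + / 2 = b)
    by (unfold L, b; rewrite INR_IZR_INZ, Z2Nat.id, plus_IZR, minus_IZR by lia; field).
  apply (abel_bound
    (fun g => sum_len (fun k => sin_div g (u - IZR k)) m1 L)
    (fun g => - (cos (g * a) / a) + cos (g * b) / b)
    (fun g => sin (g * a) - sin (g * b))); [exact Hg| | |].
  - intros g Hg'; assert (Hs : sin (g / 2) <> 0) by (apply Rgt_not_eq, sin_gt_0; lra).
    replace ((sin (g * a) - sin (g * b)) / (2 * sin (g / 2)))
      with (sum_len (fun k => cos (g * (u - IZR k))) m1 L).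
    + apply is_derive_sum_len with (F := fun x k => sin_div x (u - IZR k)).
      intros k; apply is_derive_sin_div.
    + apply (Rmult_eq_reg_l (2 * sin (g / 2))); [|lra].
      rewrite sum_len_cos_telescope, <- HL; unfold a; field; exact Hs.
  - intros g; auto_derive; [repeat split; auto|field; auto].
  - intros g; eapply Rle_trans; [apply Rabs_triang|]; rewrite Rabs_Ropp.
    apply Rplus_le_compat; apply Rabs_div_le_inv; auto; apply Rabs_le, COS_bound.
Qed.

Lemma zsum_cos_div_close g0 u m1 m2 : 0 < g0 < 2 * PI -> (m1 <= m2 + 1)%Z ->
  u - IZR m1 + / 2 <> 0 -> u - IZR m2 - / 2 <> 0 ->
  Rabs (zsum (fun k => cos_div g0 (u - IZR k) - cos_div PI (u - IZR k)) m1 m2)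
  <= (/ Rabs (u - IZR m1 + / 2) + / Rabs (u - IZR m2 - / 2)) * abel_const g0.
Proof.
  intros Hg Hm Ha Hb; unfold zsum; rewrite sum_len_minus.
  set (L := Z.to_nat (m2 - m1 + 1)); set (a := u - IZR m1 + / 2) in *.
  set (b := u - IZR m2 - / 2) in *.
  assert (HL : u - IZR m1 - INR L + / 2 = b)
    by (unfold L, b; rewrite INR_IZR_INZ, Z2Nat.id, plus_IZR, minus_IZR by lia; field).
  apply (abel_bound
    (fun g => sum_len (fun k => cos_div g (u - IZR k)) m1 L)
    (fun g => sin (g * a) / a - sin (g * b) / b)
    (fun g => cos (g * a) - cos (g * b))); [exact Hg| | |].
  - intros g Hg'; assert (Hs : sin (g / 2) <> 0) by (apply Rgt_not_eq, sin_gt_0; lra).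
    replace ((cos (g * a) - cos (g * b)) / (2 * sin (g / 2)))
      with (sum_len (fun k => - sin (g * (u - IZR k))) m1 L).
    + apply is_derive_sum_len with (F := fun x k => cos_div x (u - IZR k)).
      intros k; apply is_derive_cos_div.
    + apply (Rmult_eq_reg_l (2 * sin (g / 2))); [|lra].
      rewrite (sum_len_ext _ (fun k => -1 * sin (g * (u - IZR k)))) by (intros; ring).
      rewrite sum_len_scal.
      replace (2 * sin (g / 2) * (-1 * sum_len (fun k => sin (g * (u - IZR k))) m1 L))
        with (- (2 * sin (g / 2) * sum_len (fun k => sin (g * (u - IZR k))) m1 L)) by ring.
      rewrite sum_len_sin_telescope, HL; unfold a; field; exact Hs.
  - intros g; auto_derive; [repeat split; auto|field; auto].
  - intros g; unfold Rminus; eapply Rle_trans; [apply Rabs_triang|]; rewrite Rabs_Ropp.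
    apply Rplus_le_compat; apply Rabs_div_le_inv; auto; apply Rabs_le, SIN_bound.
Qed.

Lemma inv_window_ends_small u eps : 0 < eps -> exists M : Z, (0 <= M)%Z /\
  forall m1 m2, (m1 <= - M)%Z -> (M <= m2)%Z ->
    u - IZR m1 + / 2 <> 0 /\ u - IZR m2 - / 2 <> 0 /\
    / Rabs (u - IZR m1 + / 2) + / Rabs (u - IZR m2 - / 2) < eps.
Proof.
  intros He; destruct (exists_IZR_gt (Rabs u + 2 / eps)) as [M [HM0 HM]].
  exists M; split; [exact HM0|]; intros m1 m2 H1 H2.
  apply IZR_le in H1; apply IZR_le in H2; rewrite opp_IZR in H1.
  pose proof (Rle_abs u); pose proof (Rle_abs (- u)); rewrite Rabs_Ropp in *.
  assert (He2 : 0 < 2 / eps) by (apply Rdiv_lt_0_compat; lra).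
  assert (Ha : 2 / eps < Rabs (u - IZR m1 + / 2)) by (rewrite Rabs_right; lra).
  assert (Hb : 2 / eps < Rabs (u - IZR m2 - / 2)) by (rewrite Rabs_left; lra).
  assert (Hinv : forall x, 2 / eps < x -> / x < eps / 2).
  { intros x Hx; replace (eps / 2) with (/ (2 / eps)) by (field; lra).
    apply Rinv_lt_contravar; [nra|exact Hx]. }
  repeat split.
  - intros E; rewrite E, Rabs_R0 in Ha; lra.
  - intros E; rewrite E, Rabs_R0 in Hb; lra.
  - pose proof (Hinv _ Ha); pose proof (Hinv _ Hb); lra.
Qed.

Lemma Zsum_cv_0_of_end_bound f u K :
  (forall m1 m2, (m1 <= m2 + 1)%Z -> u - IZR m1 + / 2 <> 0 -> u - IZR m2 - / 2 <> 0 ->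
     Rabs (zsum f m1 m2) <= (/ Rabs (u - IZR m1 + / 2) + / Rabs (u - IZR m2 - / 2)) * K) ->
  Zsum_cv f 0.
Proof.
  intros Hf eps He.
  assert (HK : 0 < Rabs K + 1) by (pose proof (Rabs_pos K); lra).
  destruct (inv_window_ends_small u (eps / (Rabs K + 1))) as [M [HM0 HM]];
    [apply Rdiv_lt_0_compat; lra|].
  exists M; intros m1 m2 H1 H2; destruct (HM m1 m2 H1 H2) as [Ha [Hb Hlt]].
  rewrite Rminus_0_r; eapply Rle_lt_trans; [apply Hf; auto; lia|].
  set (X := / Rabs (u - IZR m1 + / 2) + / Rabs (u - IZR m2 - / 2)) in *.
  assert (HX : 0 <= X) by (unfold X; apply Rplus_le_le_0_compat;
    left; apply Rinv_0_lt_compat, Rabs_pos_lt; auto).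
  apply Rle_lt_trans with (X * (Rabs K + 1)); [pose proof (Rle_abs K); nra|].
  apply Rmult_lt_reg_r with (/ (Rabs K + 1)); [apply Rinv_0_lt_compat; lra|].
  rewrite Rmult_assoc, Rinv_r by lra; rewrite Rmult_1_r; exact Hlt.
Qed.

Lemma Zsum_cv_sin_div g u : 0 < g < 2 * PI ->
  Zsum_cv (fun k => sin_div g (u - IZR k) - sin_div PI (u - IZR k)) 0.
Proof.
  intros Hg; apply (Zsum_cv_0_of_end_bound _ u (abel_const g)).
  intros; apply zsum_sin_div_close; auto.
Qed.

Lemma Zsum_cv_cos_div g u : 0 < g < 2 * PI ->
  Zsum_cv (fun k => cos_div g (u - IZR k) - cos_div PI (u - IZR k)) 0.
Proof.
  intros Hg; apply (Zsum_cv_0_of_end_bound _ u (abel_const g)).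
  intros; apply zsum_cos_div_close; auto.
Qed.

(** * The series [sum_k sinc (u - k)] equals 1 *)

Fixpoint alt_sum (L : nat) (e : nat -> R) : R :=
  match L with O => 0 | S L' => e O - alt_sum L' (fun j => e (S j)) end.

Lemma alt_sum_ext L e e' : (forall j, e j = e' j) -> alt_sum L e = alt_sum L e'.
Proof.
  revert e e'; induction L as [|L IH]; intros e e' H; simpl; [reflexivity|].
  rewrite H, (IH _ (fun j => e' (S j))); [reflexivity|intros; apply H].
Qed.

Lemma alt_sum_bounds L e : (forall j, 0 <= e (S j) <= e j) -> 0 <= alt_sum L e <= e O.
Proof.
  revert e; induction L as [|L IH]; intros e H; simpl.
  - specialize (H O); lra.
  - specialize (IH (fun j => e (S j)) (fun j => H (S j))); specialize (H O); simpl in IH; lra.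
Qed.

(** Consecutive terms of [sinc (u - k)] alternate in sign since [sin] is [PI]-antiperiodic. *)
Lemma sum_len_sinc_alt u m L : u < IZR m ->
  sum_len (fun k => sinc (u - IZR k)) m L =
  - (sin (PI * (u - IZR m)) / PI) * alt_sum L (fun j => / (IZR m + INR j - u)).
Proof.
  assert (HP := PI_RGT_0); revert m; induction L as [|L IH]; intros m Hm; [simpl; ring|].
  cbn [sum_len alt_sum]; rewrite IH by (rewrite plus_IZR; lra).
  rewrite sinc_nz by lra.
  rewrite (alt_sum_ext L (fun j => / (IZR m + INR (S j) - u))
                         (fun j => / (IZR (m + 1) + INR j - u)))
    by (intros j; rewrite plus_IZR, S_INR; f_equal; ring).
  rewrite plus_IZR; replace (PI * (u - (IZR m + 1))) with (PI * (u - IZR m) - PI) by ring.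
  rewrite sin_minus, sin_PI, cos_PI; replace (IZR m + INR 0 - u) with (IZR m - u) by (simpl; ring).
  field; split; lra.
Qed.

Lemma sum_len_sinc_right_tail u m L : u < IZR m ->
  Rabs (sum_len (fun k => sinc (u - IZR k)) m L) <= / (PI * (IZR m - u)).
Proof.
  intros Hm; assert (HP := PI_RGT_0); rewrite sum_len_sinc_alt by exact Hm.
  destruct (alt_sum_bounds L (fun j => / (IZR m + INR j - u))) as [Hb1 Hb2].
  { intros j; rewrite S_INR; pose proof (pos_INR j); split.
    - left; apply Rinv_0_lt_compat; lra.
    - apply Rinv_le_contravar; lra. }
  simpl in Hb2; rewrite Rplus_0_r in Hb2.
  rewrite Rabs_mult, Rabs_Ropp, (Rabs_right (alt_sum _ _)) by lra.
  rewrite Rinv_mult; apply Rmult_le_compat; [apply Rabs_pos|lra| |exact Hb2].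
  replace (/ PI) with (/ Rabs PI) by (rewrite Rabs_right; lra).
  apply Rabs_div_le_inv; [apply Rabs_le, SIN_bound|lra].
Qed.

Lemma sum_len_sinc_left_tail u m L : IZR m + INR L - 1 < u ->
  Rabs (sum_len (fun k => sinc (u - IZR k)) m L) <= / (PI * (u - (IZR m + INR L - 1))).
Proof.
  intros Hm; rewrite sum_len_rev.
  rewrite (sum_len_ext _ (fun k => sinc (- u - IZR k)))
    by (intros k _; rewrite opp_IZR, <- sinc_opp; f_equal; ring).
  eapply Rle_trans; [apply sum_len_sinc_right_tail|];
    rewrite plus_IZR, opp_IZR, plus_IZR, <- INR_IZR_INZ; [lra|].
  right; f_equal; f_equal; ring.
Qed.

Lemma inv_PI_mul_le x y : 0 < x <= y -> / (PI * y) <= / (PI * x).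
Proof. intros H; assert (HP := PI_RGT_0); apply Rinv_le_contravar; nra. Qed.

Lemma zsum_sinc_tails u r (M : Z) m1 m2 : Rabs u <= r <= IZR M ->
  (m1 <= - M)%Z -> (M <= m2)%Z ->
  Rabs (zsum (fun k => sinc (u - IZR k)) m1 m2 - zsum (fun k => sinc (u - IZR k)) (- M) M)
  <= 2 / (PI * (IZR M + 1 - r)).
Proof.
  intros Hu H1 H2; assert (HP := PI_RGT_0).
  assert (HM0 : (0 <= M)%Z) by (apply le_IZR; pose proof (Rabs_pos u); lra).
  pose proof (Rle_abs u); pose proof (Rle_abs (- u)); rewrite Rabs_Ropp in *.
  rewrite (zsum_split _ m1 (- M) m2), (zsum_split _ (- M) (M + 1) m2) by lia.
  replace (M + 1 - 1)%Z with M by lia.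
  match goal with |- Rabs (?l + (?c + ?r) - ?c) <= _ =>
    replace (l + (c + r) - c) with (l + r) by ring end.
  replace (2 / (PI * (IZR M + 1 - r))) with
    (/ (PI * (IZR M + 1 - r)) + / (PI * (IZR M + 1 - r))) by (field; lra).
  eapply Rle_trans; [apply Rabs_triang|]; apply Rplus_le_compat; unfold zsum.
  - assert (HL : INR (Z.to_nat (- M - 1 - m1 + 1)) = - IZR M - IZR m1)
      by (rewrite INR_IZR_INZ, Z2Nat.id, <- opp_IZR, <- minus_IZR by lia; f_equal; lia).
    eapply Rle_trans; [apply sum_len_sinc_left_tail; rewrite HL; lra|].
    rewrite HL; apply inv_PI_mul_le; lra.
  - eapply Rle_trans; [apply sum_len_sinc_right_tail; rewrite plus_IZR; lra|].
    rewrite plus_IZR; apply inv_PI_mul_le; lra.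
Qed.

Lemma exists_nat_tail_small r C eps : 0 < eps -> exists N : nat,
  r <= INR N /\ C / (PI * (INR N + 1 - r)) < eps.
Proof.
  intros He; assert (HP := PI_RGT_0).
  destruct (exists_IZR_gt (Rabs r + Rabs C / (PI * eps))) as [M [HM0 HM]].
  exists (Z.to_nat M); rewrite INR_IZR_INZ, Z2Nat.id by exact HM0.
  pose proof (Rle_abs r); pose proof (Rle_abs C).
  assert (Hq : 0 <= Rabs C / (PI * eps))
    by (apply Rmult_le_pos; [apply Rabs_pos|left; apply Rinv_0_lt_compat; nra]).
  split; [lra|].
  apply Rmult_lt_reg_r with (PI * (IZR M + 1 - r)); [nra|].
  unfold Rdiv; rewrite Rmult_assoc, Rinv_l, Rmult_1_r by nra.
  assert (Hd : Rabs C / (PI * eps) * (PI * eps) = Rabs C) by (field; lra).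
  set (q := Rabs C / (PI * eps)) in *.
  assert (0 < PI * eps) by nra.
  assert (0 < (IZR M + 1 - r - q) * (PI * eps)) by (apply Rmult_lt_0_compat; lra).
  nra.
Qed.

Definition sinc_partial (u : R) (n : nat) : R :=
  zsum (fun k => sinc (u - IZR k)) (- Z.of_nat n) (Z.of_nat n).

Lemma sinc_partial_tails u r (N : nat) m1 m2 : Rabs u <= r <= INR N ->
  (m1 <= - Z.of_nat N)%Z -> (Z.of_nat N <= m2)%Z ->
  Rabs (zsum (fun k => sinc (u - IZR k)) m1 m2 - sinc_partial u N)
  <= 2 / (PI * (INR N + 1 - r)).
Proof. rewrite INR_IZR_INZ; apply zsum_sinc_tails. Qed.

Lemma sinc_partial_cauchy u : Cauchy_crit (sinc_partial u).
Proof.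
  intros eps He; destruct (exists_nat_tail_small (Rabs u) 4 eps He) as [N [HN HNe]].
  exists N; intros n m Hn Hm; unfold R_dist.
  assert (A := sinc_partial_tails u (Rabs u) N (- Z.of_nat n) (Z.of_nat n)
                 ltac:(lra) ltac:(lia) ltac:(lia)).
  assert (B := sinc_partial_tails u (Rabs u) N (- Z.of_nat m) (Z.of_nat m)
                 ltac:(lra) ltac:(lia) ltac:(lia)).
  fold (sinc_partial u n) in A; fold (sinc_partial u m) in B.
  replace (sinc_partial u n - sinc_partial u m)
    with ((sinc_partial u n - sinc_partial u N) - (sinc_partial u m - sinc_partial u N)) by ring.
  eapply Rle_lt_trans; [apply Rabs_triang|rewrite Rabs_Ropp].
  replace (4 / (PI * (INR N + 1 - Rabs u)))
    with (2 / (PI * (INR N + 1 - Rabs u)) + 2 / (PI * (INR N + 1 - Rabs u))) in HNe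
    by (unfold Rdiv; ring).
  lra.
Qed.

Definition sinc_series (u : R) : R := proj1_sig (Rcomplete.R_complete _ (sinc_partial_cauchy u)).

Lemma sinc_series_rate u r (N : nat) m1 m2 : Rabs u <= r <= INR N ->
  (m1 <= - Z.of_nat N)%Z -> (Z.of_nat N <= m2)%Z ->
  Rabs (zsum (fun k => sinc (u - IZR k)) m1 m2 - sinc_series u)
  <= 4 / (PI * (INR N + 1 - r)).
Proof.
  intros Hr H1 H2; unfold sinc_series; destruct (Rcomplete.R_complete _ _) as [l Hl]; simpl.
  assert (Hlim : Rabs (sinc_partial u N - l) <= 2 / (PI * (INR N + 1 - r))).
  { apply Rle_plus_epsilon; intros eps He; destruct (Hl eps He) as [n0 Hn0].
    set (n := max N n0); specialize (Hn0 n ltac:(lia)); unfold R_dist in Hn0.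
    assert (T := sinc_partial_tails u r N (- Z.of_nat n) (Z.of_nat n) Hr ltac:(lia) ltac:(lia)).
    fold (sinc_partial u n) in T; rewrite Rabs_minus_sym in T.
    replace (sinc_partial u N - l)
      with ((sinc_partial u N - sinc_partial u n) + (sinc_partial u n - l)) by ring.
    eapply Rle_trans; [apply Rabs_triang|lra]. }
  assert (T := sinc_partial_tails u r N m1 m2 Hr H1 H2).
  replace (zsum (fun k => sinc (u - IZR k)) m1 m2 - l)
    with ((zsum (fun k => sinc (u - IZR k)) m1 m2 - sinc_partial u N) + (sinc_partial u N - l))
    by ring.
  replace (4 / (PI * (INR N + 1 - r)))
    with (2 / (PI * (INR N + 1 - r)) + 2 / (PI * (INR N + 1 - r))) by (unfold Rdiv; ring).
  eapply Rle_trans; [apply Rabs_triang|lra].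
Qed.

Lemma Zsum_cv_sinc_series u : Zsum_cv (fun k => sinc (u - IZR k)) (sinc_series u).
Proof.
  intros eps He; destruct (exists_nat_tail_small (Rabs u) 4 eps He) as [N [HN HNe]].
  exists (Z.of_nat N); intros m1 m2 H1 H2.
  eapply Rle_lt_trans; [apply (sinc_series_rate u (Rabs u) N); auto; lra|exact HNe].
Qed.

Lemma sinc_series_periodic u z : sinc_series (u + IZR z) = sinc_series u.
Proof.
  apply (Zsum_cv_unique (fun k => sinc (u + IZR z - IZR k))); [apply Zsum_cv_sinc_series|].
  apply (Zsum_cv_ext (fun k => sinc (u - IZR (k + - z)))).
  - intros k; rewrite plus_IZR, opp_IZR; f_equal; ring.
  - apply (Zsum_cv_shift (fun k => sinc (u - IZR k))), Zsum_cv_sinc_series.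
Qed.

Lemma sinc_series_0 : sinc_series 0 = 1.
Proof.
  apply (Zsum_cv_unique (fun k => sinc (0 - IZR k))); [apply Zsum_cv_sinc_series|].
  intros eps He; exists 0%Z; intros m1 m2 H1 H2.
  unfold zsum; rewrite (sum_len_delta _ _ _ 0%Z).
  - rewrite Rminus_0_r, sinc_0, Rminus_diag, Rabs_R0; exact He.
  - lia.
  - intros k Hk; rewrite Rminus_0_l, <- opp_IZR; apply sinc_IZR; lia.
Qed.

Lemma continuity_sum_len (F : R -> Z -> R) m L :
  (forall k, continuity (fun u => F u k)) -> continuity (fun u => sum_len (F u) m L).
Proof.
  intros HF; revert m; induction L as [|L IH]; intros m; simpl.
  - apply continuity_const; intros x y; reflexivity.
  - apply (continuity_plus (fun u => F u m)); [apply HF|apply IH].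
Qed.

Lemma continuity_sinc_partial n : continuity (fun u => sinc_partial u n).
Proof.
  apply continuity_sum_len; intros k u0.
  apply (continuity_pt_comp (fun u => u - IZR k) sinc); [|apply continuity_sinc].
  apply derivable_continuous_pt; eexists; apply is_derive_Reals.
  auto_derive; [exact I|reflexivity].
Qed.

(** Uniform approximation by [sinc_partial _ N] on [[c - 1, c + 1]]. *)
Lemma continuity_sinc_series : continuity sinc_series.
Proof.
  intros c eps He; assert (HP := PI_RGT_0).
  set (r := Rabs c + 1).
  destruct (exists_nat_tail_small r 4 (eps / 3)) as [N [HN HNe]]; [lra|].
  destruct (continuity_sinc_partial N c (eps / 3)) as [d [Hd Hcd]]; [lra|].
  exists (Rmin 1 d); split; [apply Rmin_pos; lra|].
  intros y [_ Hy]; simpl in Hy |- *; unfold R_dist in Hy |- *.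
  assert (Hy1 : Rabs (y - c) < 1) by (eapply Rlt_le_trans; [exact Hy|apply Rmin_l]).
  assert (Hyd : Rabs (y - c) < d) by (eapply Rlt_le_trans; [exact Hy|apply Rmin_r]).
  assert (Hyr : Rabs y <= r).
  { unfold r; replace y with ((y - c) + c) by ring.
    eapply Rle_trans; [apply Rabs_triang|lra]. }
  assert (Ay := sinc_series_rate y r N (- Z.of_nat N) (Z.of_nat N)
                  ltac:(lra) ltac:(lia) ltac:(lia)).
  assert (Hcr : Rabs c <= r) by (unfold r; lra).
  assert (Ac := sinc_series_rate c r N (- Z.of_nat N) (Z.of_nat N)
                  ltac:(lra) ltac:(lia) ltac:(lia)).
  destruct (Req_EM_T y c) as [->|Hyc]; [rewrite Rminus_diag, Rabs_R0; exact He|].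
  specialize (Hcd y (conj (conj I (not_eq_sym Hyc)) Hyd)); simpl in Hcd; unfold R_dist in Hcd.
  fold (sinc_partial y N) (sinc_partial c N) in Ay, Ac.
  rewrite Rabs_minus_sym in Ay.
  replace (sinc_series y - sinc_series c) with
    ((sinc_series y - sinc_partial y N) + (sinc_partial y N - sinc_partial c N)
     + (sinc_partial c N - sinc_series c)) by ring.
  eapply Rle_lt_trans; [apply Rabs_triang|].
  eapply Rle_lt_trans; [apply Rplus_le_compat_r, Rabs_triang|lra].
Qed.

Lemma sinc_half_split s :
  sinc (s / 2) = 2 / PI * (sin_div (PI / 2) s - sin_div PI s) + 2 * sinc s.
Proof.
  assert (HP := PI_RGT_0); rewrite sin_div_PI; unfold sin_div.
  destruct (Req_EM_T s 0) as [->|H].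
  - unfold Rdiv at 1; rewrite Rmult_0_l, sinc_0; field; lra.
  - rewrite sinc_nz by lra; replace (PI / 2 * s) with (PI * (s / 2)) by field.
    field; lra.
Qed.

(** Splitting [sum_j sinc ((u - j) / 2)] into even and odd [j]. *)
Lemma sinc_series_double u :
  sinc_series (u / 2) + sinc_series ((u + 1) / 2) = 2 * sinc_series u.
Proof.
  assert (HP := PI_RGT_0).
  assert (Hhalf : Zsum_cv (fun j => sinc ((u - IZR j) / 2)) (2 * sinc_series u)).
  { apply (Zsum_cv_ext (fun j => 2 / PI * (sin_div (PI / 2) (u - IZR j) - sin_div PI (u - IZR j))
                                 + 2 * sinc (u - IZR j))).
    - intros j; symmetry; apply sinc_half_split.
    - replace (2 * sinc_series u) with (2 / PI * 0 + 2 * sinc_series u) by ring.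
      apply Zsum_cv_plus; apply Zsum_cv_scal;
        [apply Zsum_cv_sin_div; lra|apply Zsum_cv_sinc_series]. }
  assert (Hsum : Zsum_cv (fun k => sinc (u / 2 - IZR k) + sinc ((u + 1) / 2 - IZR k))
                   (sinc_series (u / 2) + sinc_series ((u + 1) / 2)))
    by (apply Zsum_cv_plus; apply Zsum_cv_sinc_series).
  apply (Zsum_cv_unique _ _ _ Hsum).
  apply (Zsum_cv_ext _ _ _ (fun k => Rplus_comm _ _)).
  apply (Zsum_cv_ext (fun k => sinc ((u - IZR (2 * k - 1)) / 2) + sinc ((u - IZR (2 * k)) / 2))).
  - intros k; rewrite minus_IZR, !mult_IZR; f_equal; f_equal; field.
  - exact (Zsum_cv_pair _ _ Hhalf).
Qed.

(** The equation forces the maximum value, attained at [x0], to be attained at every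
    [x0 / 2^n] as well, hence by continuity at [0]. *)
Lemma doubling_max_at_0 (f : R -> R) x0 :
  continuity_pt f 0 -> (forall x, f (x / 2) + f ((x + 1) / 2) = 2 * f x) ->
  (forall y, f y <= f x0) -> f x0 = f 0.
Proof.
  intros Hc Hd Hmax.
  assert (Hhalf : forall n, f (x0 * (/ 2) ^ n) = f x0).
  { induction n as [|n IH]; [simpl; rewrite Rmult_1_r; reflexivity|].
    specialize (Hd (x0 * (/ 2) ^ n)); rewrite IH in Hd.
    pose proof (Hmax (x0 * (/ 2) ^ n / 2)); pose proof (Hmax ((x0 * (/ 2) ^ n + 1) / 2)).
    replace (x0 * (/ 2) ^ S n) with (x0 * (/ 2) ^ n / 2) by (simpl; field); lra. }
  apply cond_eq; intros eps He.
  destruct (Hc eps He) as [d [Hd0 Hdist]].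
  destruct (pow_lt_1_zero (/ 2) ltac:(rewrite Rabs_right; lra) (d / (Rabs x0 + 1)))
    as [N HN]; [apply Rdiv_lt_0_compat; [lra|pose proof (Rabs_pos x0); lra]|].
  specialize (HN N (Nat.le_refl N)).
  rewrite <- (Hhalf N).
  destruct (Req_EM_T (x0 * (/ 2) ^ N) 0) as [->|Hnz]; [rewrite Rminus_diag, Rabs_R0; exact He|].
  apply (Hdist (x0 * (/ 2) ^ N)); split; [split; [exact I|auto]|].
  simpl; unfold R_dist; rewrite Rminus_0_r, Rabs_mult.
  pose proof (Rabs_pos x0); pose proof (Rabs_pos ((/ 2) ^ N)).
  apply Rle_lt_trans with ((Rabs x0 + 1) * Rabs ((/ 2) ^ N)); [nra|].
  apply Rmult_lt_reg_r with (/ (Rabs x0 + 1)); [apply Rinv_0_lt_compat; lra|].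
  replace ((Rabs x0 + 1) * Rabs ((/ 2) ^ N) * / (Rabs x0 + 1)) with (Rabs ((/ 2) ^ N))
    by (field; lra).
  exact HN.
Qed.

Lemma sinc_series_1 u : sinc_series u = 1.
Proof.
  assert (Hcont : forall c, 0 <= c <= 1 -> continuity_pt sinc_series c)
    by (intros; apply continuity_sinc_series).
  assert (Hred : forall y, exists y', 0 <= y' <= 1 /\ sinc_series y = sinc_series y').
  { intros y; exists (y + IZR (- Zfloor y)); rewrite sinc_series_periodic; split; [|reflexivity].
    pose proof (Zfloor_bound y); rewrite opp_IZR; lra. }
  destruct (continuity_ab_maj sinc_series 0 1 ltac:(lra) Hcont) as [xM [HxM _]].
  destruct (continuity_ab_min sinc_series 0 1 ltac:(lra) Hcont) as [xm [Hxm _]].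
  assert (HM : sinc_series xM = 1).
  { rewrite <- sinc_series_0; apply doubling_max_at_0;
      [apply continuity_sinc_series|apply sinc_series_double|].
    intros y; destruct (Hred y) as [y' [Hy' ->]]; apply HxM, Hy'. }
  assert (Hm : sinc_series xm = 1).
  { rewrite <- sinc_series_0; enough (- sinc_series xm = - sinc_series 0) by lra.
    apply (doubling_max_at_0 (fun x => - sinc_series x)).
    - apply continuity_pt_opp, continuity_sinc_series.
    - intros x; pose proof (sinc_series_double x); lra.
    - intros y; destruct (Hred y) as [y' [Hy' ->]]; apply Ropp_le_contravar, Hxm, Hy'. }
  destruct (Hred u) as [u' [Hu' ->]].
  specialize (HxM u' Hu'); specialize (Hxm u' Hu'); lra.
Qed.

Lemma Zsum_cv_sinc u : Zsum_cv (fun k => sinc (u - IZR k)) 1.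
Proof. rewrite <- (sinc_series_1 u); apply Zsum_cv_sinc_series. Qed.

(** * Band-limited exponentials are reproduced *)

Lemma cos_mul_sinc w s : cos (w * s) * sinc s =
  / (2 * PI) * (sin_div (PI - w) s - sin_div PI s)
  + / (2 * PI) * (sin_div (PI + w) s - sin_div PI s) + sinc s.
Proof.
  assert (HP := PI_RGT_0); unfold sin_div; destruct (Req_EM_T s 0) as [->|H].
  - rewrite Rmult_0_r, cos_0, sinc_0; field; lra.
  - rewrite sinc_nz by exact H.
    replace ((PI - w) * s) with (PI * s - w * s) by ring.
    replace ((PI + w) * s) with (PI * s + w * s) by ring.
    rewrite sin_minus, sin_plus; field; split; lra.
Qed.

Lemma sin_mul_sinc w s : sin (w * s) * sinc s =
  / (2 * PI) * (cos_div (PI - w) s - cos_div PI s)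
  + - / (2 * PI) * (cos_div (PI + w) s - cos_div PI s).
Proof.
  assert (HP := PI_RGT_0); unfold cos_div; destruct (Req_EM_T s 0) as [->|H].
  - rewrite Rmult_0_r, sin_0; ring.
  - rewrite sinc_nz by exact H.
    replace ((PI - w) * s) with (PI * s - w * s) by ring.
    replace ((PI + w) * s) with (PI * s + w * s) by ring.
    rewrite cos_minus, cos_plus; field; split; lra.
Qed.

Lemma Zsum_cv_cos_mul_sinc u w : - PI < w < PI ->
  Zsum_cv (fun k => cos (w * (u - IZR k)) * sinc (u - IZR k)) 1.
Proof.
  intros Hw; apply (Zsum_cv_ext _ _ _ (fun k => eq_sym (cos_mul_sinc w (u - IZR k)))).
  replace 1 with (/ (2 * PI) * 0 + / (2 * PI) * 0 + 1) by ring.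
  apply Zsum_cv_plus; [apply Zsum_cv_plus; apply Zsum_cv_scal|apply Zsum_cv_sinc];
    apply Zsum_cv_sin_div; lra.
Qed.

Lemma Zsum_cv_sin_mul_sinc u w : - PI < w < PI ->
  Zsum_cv (fun k => sin (w * (u - IZR k)) * sinc (u - IZR k)) 0.
Proof.
  intros Hw; apply (Zsum_cv_ext _ _ _ (fun k => eq_sym (sin_mul_sinc w (u - IZR k)))).
  replace 0 with (/ (2 * PI) * 0 + - / (2 * PI) * 0) at 1 by ring.
  apply Zsum_cv_plus; apply Zsum_cv_scal; apply Zsum_cv_cos_div; lra.
Qed.

(** * Partial sums of the cylinder interpolation *)

Lemma Zceil_le_iff x z : (Zceil x <= z)%Z <-> x <= IZR z.
Proof.
  pose proof (Zceil_bound x) as Hb; split; intros H.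
  - apply IZR_le in H; lra.
  - destruct (Z_le_gt_dec (Zceil x) z) as [|Hgt]; [assumption|].
    assert (Hz : IZR (z + 1) <= IZR (Zceil x)) by (apply IZR_le; lia).
    rewrite plus_IZR in Hz; lra.
Qed.

Lemma le_Zfloor_iff x z : (z <= Zfloor x)%Z <-> IZR z <= x.
Proof.
  pose proof (Zfloor_bound x) as Hb; split; intros H; [apply IZR_le in H; lra|].
  apply Zfloor_lub, H.
Qed.

Definition window_lo (N : nat) (p : R) : Z := Zceil (- INR N - p).
Definition window_hi (N : nat) (p : R) : Z := Zfloor (INR N - p).

Lemma in_window_iff N p k :
  (- INR N <= p + IZR k /\ p + IZR k <= INR N) <-> (window_lo N p <= k <= window_hi N p)%Z.
Proof. unfold window_lo, window_hi; rewrite Zceil_le_iff, le_Zfloor_iff; lra. Qed.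

Lemma Z_le_of_IZR_lt_succ a b : IZR a < IZR b + 1 -> (a <= b)%Z.
Proof. intros H; rewrite <- plus_IZR in H; apply lt_IZR in H; lia. Qed.

Lemma cyl_partial_eq x t p N :
  cyl_partial x t p N =
  (zsum (fun k => sinc (t - (p + IZR k)) * fst (x (p + IZR k))) (window_lo N p) (window_hi N p),
   zsum (fun k => sinc (t - (p + IZR k)) * snd (x (p + IZR k))) (window_lo N p) (window_hi N p)).
Proof.
  set (term := fun (pr : Defs.C -> R) k =>
    if Rle_dec (- INR N) (p + IZR k) then
      if Rle_dec (p + IZR k) (INR N) then sinc (t - (p + IZR k)) * pr (x (p + IZR k)) else 0
    else 0).
  set (lo := (- Z.of_nat N - Zfloor p - 1)%Z).
  set (hi := (lo + Z.of_nat (2 * N + 3) - 1)%Z).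
  transitivity (zsum (term fst) lo hi, zsum (term snd) lo hi).
  - unfold cyl_partial, zsum; change (Defs.Zfloor p) with (Zfloor p); fold lo.
    replace (Z.to_nat (hi - lo + 1)) with (2 * N + 3)%nat by (unfold hi; lia).
    generalize lo (2 * N + 3)%nat; intros m L; revert m.
    induction L as [|L IH]; intros m; [reflexivity|]; cbn [zrange fold_right sum_len].
    rewrite IH; unfold term; cbv zeta.
    destruct (Rle_dec (- INR N) (p + IZR m)); [destruct (Rle_dec (p + IZR m) (INR N))|];
      unfold Cadd, Cscal; simpl; f_equal; ring.
  - pose proof (Zfloor_bound p); pose proof (Zceil_bound (- INR N - p));
      pose proof (Zfloor_bound (INR N - p)); pose proof (pos_INR N).
    assert (HN : INR N = IZR (Z.of_nat N)) by apply INR_IZR_INZ.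
    assert (Hlo : (lo <= window_lo N p)%Z).
    { apply Z_le_of_IZR_lt_succ; unfold lo, window_lo.
      rewrite !minus_IZR, opp_IZR, <- HN; lra. }
    assert (Hhi : (window_hi N p <= hi)%Z).
    { apply Z_le_of_IZR_lt_succ; unfold hi, lo, window_hi.
      rewrite minus_IZR, plus_IZR, !minus_IZR, opp_IZR, <- !INR_IZR_INZ, plus_INR, mult_INR.
      simpl; lra. }
    assert (Hw : (window_lo N p <= window_hi N p + 1)%Z).
    { apply Z_le_of_IZR_lt_succ; unfold window_lo, window_hi; rewrite plus_IZR; lra. }
    assert (Hterm : forall pr, zsum (term pr) lo hi =
      zsum (fun k => sinc (t - (p + IZR k)) * pr (x (p + IZR k))) (window_lo N p) (window_hi N p)).
    { intros pr; apply zsum_restrict; auto; intros k Hk; unfold term.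
      - apply in_window_iff in Hk; destruct Hk as [Hk1 Hk2].
        destruct (Rle_dec (- INR N) (p + IZR k)); [destruct (Rle_dec (p + IZR k) (INR N))|];
          tauto.
      - assert (Hk' : ~ (- INR N <= p + IZR k /\ p + IZR k <= INR N))
          by (rewrite in_window_iff; lia).
        destruct (Rle_dec (- INR N) (p + IZR k)); [destruct (Rle_dec (p + IZR k) (INR N))|];
          tauto. }
    rewrite !Hterm; reflexivity.
Qed.

Lemma window_unbounded p (M : Z) : exists N0 : nat, forall N : nat, (N0 <= N)%nat ->
  (window_lo N p <= - M)%Z /\ (M <= window_hi N p)%Z.
Proof.
  destruct (exists_IZR_gt (IZR M + Rabs p)) as [K [HK0 HK]].
  exists (Z.to_nat K); intros N HN.
  assert (HNK : IZR K <= INR N) by (rewrite INR_IZR_INZ; apply IZR_le; lia).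
  pose proof (Rle_abs p); pose proof (Rle_abs (- p)); rewrite Rabs_Ropp in *.
  unfold window_lo, window_hi; rewrite Zceil_le_iff, le_Zfloor_iff, opp_IZR; lra.
Qed.

Lemma cyl_interp_of_Zsum_cv x t p l1 l2 :
  Zsum_cv (fun k => sinc (t - (p + IZR k)) * fst (x (p + IZR k))) l1 ->
  Zsum_cv (fun k => sinc (t - (p + IZR k)) * snd (x (p + IZR k))) l2 ->
  cyl_interp_is x t p (l1, l2).
Proof.
  assert (Hcv : forall f l, Zsum_cv f l ->
            Un_cv (fun N => zsum f (window_lo N p) (window_hi N p)) l).
  { intros f l Hf eps He; destruct (Hf eps He) as [M HM].
    destruct (window_unbounded p M) as [N0 HN0]; exists N0; intros N HN.
    destruct (HN0 N HN); apply HM; assumption. }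
  intros H1 H2; split; simpl; eapply Un_cv_ext; [|apply Hcv, H1| |apply Hcv, H2];
    intros N; rewrite cyl_partial_eq; reflexivity.
Qed.

Lemma cexp2pi_add_IZR x z : cexp2pi (x + IZR z) = cexp2pi x.
Proof.
  assert (Hs : sin (IZR z * PI) = 0) by (apply sin_eq_0_1; exists z; reflexivity).
  unfold cexp2pi; replace (2 * PI * (x + IZR z)) with (2 * PI * x + 2 * (IZR z * PI)) by ring.
  rewrite cos_plus, sin_plus, cos_2a_sin, sin_2a, Hs; f_equal; ring.
Qed.

Theorem cyl_interp_exp b (n : Z) t p : - (1 / 2) < b < 1 / 2 ->
  cyl_interp_is (fun s => cexp2pi ((b + IZR n) * s)) t p (cexp2pi (b * t + IZR n * p)).
Proof.
  intros Hb; assert (HP := PI_RGT_0).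
  set (phi := 2 * PI * (b * t + IZR n * p)); set (w := 2 * PI * b).
  assert (Hw : - PI < w < PI) by (unfold w; split; nra).
  assert (Hterm : forall k, cexp2pi ((b + IZR n) * (p + IZR k)) =
            (cos (phi - w * (t - (p + IZR k))), sin (phi - w * (t - (p + IZR k))))).
  { intros k; rewrite <- (cexp2pi_add_IZR _ (- (n * k))).
    unfold cexp2pi, phi, w; rewrite opp_IZR, mult_IZR; f_equal; f_equal; ring. }
  unfold cexp2pi at 2; fold phi; apply cyl_interp_of_Zsum_cv.
  - apply (Zsum_cv_ext (fun k => cos phi * (cos (w * (t - p - IZR k)) * sinc (t - p - IZR k))
                                 + sin phi * (sin (w * (t - p - IZR k)) * sinc (t - p - IZR k)))).
    + intros k; rewrite Hterm; simpl; rewrite cos_minus.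
      replace (t - (p + IZR k)) with (t - p - IZR k) by ring; ring.
    + pose proof (Zsum_cv_plus _ _ _ _
        (Zsum_cv_scal (cos phi) _ _ (Zsum_cv_cos_mul_sinc (t - p) w Hw))
        (Zsum_cv_scal (sin phi) _ _ (Zsum_cv_sin_mul_sinc (t - p) w Hw))) as H.
      rewrite Rmult_1_r, Rmult_0_r, Rplus_0_r in H; exact H.
  - apply (Zsum_cv_ext (fun k => sin phi * (cos (w * (t - p - IZR k)) * sinc (t - p - IZR k))
                                 + - cos phi * (sin (w * (t - p - IZR k)) * sinc (t - p - IZR k)))).
    + intros k; rewrite Hterm; simpl; rewrite sin_minus.
      replace (t - (p + IZR k)) with (t - p - IZR k) by ring; ring.
    + pose proof (Zsum_cv_plus _ _ _ _
        (Zsum_cv_scal (sin phi) _ _ (Zsum_cv_cos_mul_sinc (t - p) w Hw))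
        (Zsum_cv_scal (- cos phi) _ _ (Zsum_cv_sin_mul_sinc (t - p) w Hw))) as H.
      rewrite Rmult_1_r, Rmult_0_r, Rplus_0_r in H; exact H.
Qed.

Theorem mainTheorem3 (a b : R) (n : Z)
  (Ha : a = b + IZR n) (Hb1 : - (1/2) < b) (Hb2 : b < 1/2) :
  (forall t p : R,
     cyl_interp_is (fun s => cexp2pi (a * s)) t p
       (cexp2pi (b * t + IZR n * rho p))) /\
  (forall v alpha t : R,
     cyl_interp_is (fun s => cexp2pi (a * s)) (v * t) (alpha * t)
       (cexp2pi ((b * v + IZR n * alpha) * t))).
Proof.
  subst a; split.
  - intros t p.
    replace (b * t + IZR n * rho p) with (b * t + IZR n * p + IZR (- (n * Int_part p)))
      by (unfold rho, Defs.Zfloor; rewrite opp_IZR, mult_IZR; ring).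
    rewrite cexp2pi_add_IZR; apply cyl_interp_exp; lra.
  - intros v alpha t.
    replace ((b * v + IZR n * alpha) * t) with (b * (v * t) + IZR n * (alpha * t)) by ring.
    apply cyl_interp_exp; lra.
Qed.
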